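(* Let $N>1$ be an integer and let data points $\{(x_n,y_n)\}_{n=0}^N\subset\mathbb{R}^2$ with $0=x_0<x_1<\dots<x_N=1$ be given. Let $a\in\mathbb{R}$ with $|a|<1$, and for $n=1,\dots,N$ let $g_n:[0,1]\to\mathbb{R}$ be continuous. Define $w_n(x,y)=(L_n(x),F_n(x,y))$ with $L_n(x)=\frac{x+n-1}{N}$ and $F_n(x,y)=ay+g_n(x)$, and assume $L_n(x_0)=x_{n-1}$, $L_n(x_N)=x_n$, $F_n(x_0,y_0)=y_{n-1}$, $F_n(x_N,y_N)=y_n$ for all $n=1,\dots,N$. Let $f^*:[0,1]\to\mathbb{R}$ be the continuous function that interpolates the data (i.e. $f^*(x_n)=y_n$) and whose graph is the attractor of the IFS $F=(\mathbb{R}^2;w_1,\dots,w_N)$. Define $g$ by $$g(x)=\begin{cases} g_n(L_n^{-1}(x)) & \text{if } x\in[x_{n-1},x_n),\ n=1,\dots,N,\\ g_N(1) & \text{if } x=1,\\ g(x-1) & \text{if } x\in(1,\infty).\end{cases}$$ Then $f^*$ is the unique solution of the functional equation $f(x)-af(Nx)=g(x)$ in the space $L^\infty(\mathbb{R})\cap L^2([0,1])\cap\mathcal{P}$.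
   Context: $\mathcal{P}$ denotes the set of functions on $\mathbb{R}$ of period $1$; $L^\infty(\mathbb{R})\cap L^2([0,1])\cap\mathcal{P}$ is the space of essentially bounded period-1 functions on $\mathbb{R}$ (square integrable on $[0,1]$), with functions identified when equal almost everywhere; $f^*$ and $g$ are regarded as elements of this space via their period-1 extensions, and uniqueness is up to equality almost everywhere. The attractor of an IFS $(\mathbb{R}^2;w_1,\dots,w_N)$ is the unique nonempty compact set $A$ with $A=\bigcup_{n=1}^N w_n(A)$; under the stated assumptions it exists and is the graph of a continuous function on $[0,1]$ interpolating the data. *)

From HB Require Import structures.
From mathcomp Require Import all_boot all_order all_algebra.
From mathcomp Require Import all_classical all_reals all_analysis.
Set Implicit Arguments. Unset Strict Implicit. Unset Printing Implicit Defensive.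
Import Order.TTheory GRing.Theory Num.Theory.
Import numFieldNormedType.Exports.
Local Open Scope classical_set_scope.
Local Open Scope ring_scope.

Section Defs.
Variable R : realType.

Definition per1 (h : R -> R) (x : R) : R := h (x - (Num.floor x)%:~R).

Definition graph01 (f : R -> R) : set (R * R) :=
  [set p | 0 <= p.1 <= 1 /\ p.2 = f p.1].

(* The attractor of the IFS (R^2; w_1,...,w_N): the nonempty compact set A
   with A = \bigcup_{n=1}^N w_n(A)  (unique under the contraction assumptions). *)
Definition is_attractor (N : nat) (w : nat -> R * R -> R * R) (A : set (R * R)) :=
  A !=set0 /\ compact A /\
  A = \bigcup_(n in [set k : nat | (1 <= k <= N)%N]) (w n @` A).

Definition in_space (f : R -> R) : Prop :=
  measurable_fun setT f /\
  (exists M : R, {ae (@lebesgue_measure R), forall x, `|f x| <= M}) /\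
  (@lebesgue_measure R).-integrable `[0, 1] (fun x => ((f x) ^+ 2)%:E) /\
  (forall x, f (x + 1) = f x).

(* The functional equation f(x) - a f(Nx) = g(x), in L^oo (i.e. a.e.). *)
Definition solves_fe (N : nat) (a : R) (g f : R -> R) : Prop :=
  {ae (@lebesgue_measure R), forall x, f x - a * f (N%:R * x) = g x}.

End Defs.

(** The graph of [fstar] being invariant under the maps [w_n] says exactly that
    [fstar ((t + n - 1) / N) = a * fstar t + g_n t] on [[0, 1]]; since [x] and
    [N x] have fractional parts [(t + m) / N] and [t] for some digit [m < N],
    the period-1 extension of [fstar] solves [f x - a f (N x) = g x] everywhere.
    It is bounded and measurable since [fstar] is continuous on [[0, 1]].  If
    [f] is another essentially bounded solution, the difference [h] satisfies
    [h x = a h (N x)] almost everywhere; as dilations preserve null sets this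
    iterates to [|h| <= |a|^k M] almost everywhere for every [k], so [h = 0]
    almost everywhere. *)
From HB Require Import structures.
From mathcomp Require Import all_boot all_order all_algebra.
From mathcomp Require Import all_classical all_reals all_analysis.
From mathcomp Require Import measurable_realfun ring lra zify.
Import Order.TTheory GRing.Theory Num.Theory.
Import numFieldNormedType.Exports.
Local Open Scope classical_set_scope.
Local Open Scope ring_scope.

Section dilation.
Context {R : realType}.
Local Notation mu := (@lebesgue_measure R).

Lemma mulr_preimage_itv_oc (k a b : R) : 0 < k ->
  ( *%R k) @^-1` `]a, b] = `]a / k, b / k]%classic.
Proof.
move=> k0; apply/seteqP; split => x /=; rewrite !in_itv /=;
  by rewrite !ltr_pdivrMr // !ler_pdivlMr // ![x * k]mulrC.
Qed.

Lemma lebesgue_measure_mulr_preimage {k : R} {A : set R} : 0 < k ->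
  measurable A -> mu A = (k%:E * mu (( *%R k) @^-1` A))%E.
Proof.
move=> k0 mA; apply: (lebesgue_measure_unique
  (mu := mscale (NngNum (ltW k0))
           (pushforward mu (( *%R k) : _ -> measurableTypeR R)))) => //.
move=> _ [[a b] _ <-].
rewrite /= /mscale /= /pushforward mulr_preimage_itv_oc //.
rewrite !lebesgue_measure_itv /= !lte_fin ltr_pM2r ?invr_gt0 //.
case: ifPn => ab; last by rewrite mule0.
by rewrite -EFinD -EFinM -mulrBl mulrCA divff ?gt_eqF // mulr1.
Qed.

Lemma ae_mulr {k : R} {P : R -> Prop} : 0 < k ->
  {ae mu, forall x, P x} -> {ae mu, forall x, P (k * x)}.
Proof.
move=> k0 [B [mB B0 PB]].
have mkB : measurable (( *%R k) @^-1` B).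
  by rewrite -[X in measurable X]setTI; exact: mulrl_measurable.
exists (( *%R k) @^-1` B); split => //; last by move=> x /= /PB.
move: B0; rewrite (lebesgue_measure_mulr_preimage k0 mB) => /eqP.
by rewrite mule_eq0 eqe gt_eqF //= => /eqP.
Qed.

End dilation.

Section contraction.
Context {R : realType}.
Local Notation mu := (@lebesgue_measure R).

(* The library's [Hint Extern] for [Filter (almost_everywhere _)] does not fire
   on [lebesgue_measure]. *)
#[local] Instance lebesgue_ae_filter : Filter (almost_everywhere mu) :=
  ae_filter_ringOfSetsType mu.

Lemma norm_le_expr_eq0 (a M y : R) : `|a| < 1 ->
  (forall n, `|y| <= `|a| ^+ n * M) -> y = 0.
Proof.
move=> a1 yle; apply/normr0_eq0/eqP; rewrite eq_le normr_ge0 andbT.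
have aM0 : (fun n => `|a| ^+ n * M) @ \oo --> 0.
  rewrite -(mul0r M); apply: cvgM (cvg_cst _).
  by apply: cvg_expr; rewrite normr_id.
by apply: (ler_cvg_to (cvg_cst `|y|) aM0); exact: nearW.
Qed.

Lemma ae_eq0_dilation_invariant {a k M : R} {h : R -> R} :
  `|a| < 1 -> 0 < k ->
  {ae mu, forall x, `|h x| <= M} ->
  {ae mu, forall x, h x = a * h (k * x)} ->
  {ae mu, forall x, h x = 0}.
Proof.
move=> a1 k0 hM hfe.
have hle n : {ae mu, forall x, `|h x| <= `|a| ^+ n * M}.
  elim: n => [|n IHn]; first by apply: filterS hM => x; rewrite mul1r.
  move: hfe (ae_mulr k0 IHn); apply: filterS2 => x -> hkx.
  by rewrite normrM exprS -mulrA ler_wpM2l.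
by apply: filterS (ae_foralln hle) => x; apply: norm_le_expr_eq0.
Qed.

Lemma solves_fe_ae_unique {N : nat} {a : R} {g f1 f2 : R -> R} :
  (0 < N)%N -> `|a| < 1 ->
  (exists M : R, {ae mu, forall x, `|f1 x| <= M}) ->
  (exists M : R, {ae mu, forall x, `|f2 x| <= M}) ->
  solves_fe N a g f1 -> solves_fe N a g f2 ->
  {ae mu, forall x, f1 x = f2 x}.
Proof.
move=> N0 a1 [M1 f1M] [M2 f2M] fe1 fe2.
have hM : {ae mu, forall x, `|f1 x - f2 x| <= M1 + M2}.
  move: f1M f2M; apply: filterS2 => x f1x f2x.
  by rewrite (le_trans (ler_normB _ _)) ?lerD.
have hfe : {ae mu, forall x,
    f1 x - f2 x = a * (f1 (N%:R * x) - f2 (N%:R * x))}.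
  move: fe1 fe2; apply: filterS2 => x e1 e2.
  by rewrite mulrBr; lra.
have := ae_eq0_dilation_invariant a1 _ hM hfe; rewrite ltr0n => /(_ N0).
by apply: filterS => x /eqP; rewrite subr_eq0 => /eqP.
Qed.

End contraction.

Section period_one_extension.
Context {R : realType}.
Implicit Types (h : R -> R) (x : R).

Lemma subr_floor_itv x : 0 <= x - (Num.floor x)%:~R < 1.
Proof.
have := floor_le x; have := floorD1_gt x; rewrite intrD => h1 h2.
by apply/andP; split; [rewrite subr_ge0 | rewrite ltrBlDl].
Qed.

Lemma per1D1 h x : per1 h (x + 1) = per1 h x.
Proof.
rewrite /per1 floorDrz ?intr_int ?floor1 ?intrD //.
by congr h; rewrite mulr1z; ring.
Qed.

Lemma per1_itv h (z : int) x :
  z%:~R <= x < z%:~R + 1 -> per1 h x = h (x - z%:~R).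
Proof. by move=> hx; rewrite /per1 (floor_def (m := z)) // intrD. Qed.

Lemma per1_natmul h (n m : nat) x :
  m%:R <= n%:R * (x - (Num.floor x)%:~R) < m%:R + 1 ->
  per1 h (n%:R * x) = h (n%:R * (x - (Num.floor x)%:~R) - m%:R).
Proof.
move=> hm; rewrite (@per1_itv h (n%:Z * Num.floor x + m%:Z)).
  by rewrite !intrD !intrM -!pmulrn mulrBr opprD addrA.
by rewrite !intrD !intrM -!pmulrn; move: hm; rewrite mulrBr; lra.
Qed.

Lemma measurable_fun_unit_itvs (f : R -> R) :
  (forall z : int, measurable_fun `[z%:~R : R, z%:~R + 1[ f) ->
  measurable_fun setT f.
Proof.
move=> mf.
pose E (i : nat) : set R := `[(i%:Z)%:~R, (i%:Z)%:~R + 1[ `|`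
   `[(- (i%:Z) - 1)%:~R, (- (i%:Z) - 1)%:~R + 1[.
have -> : setT = \bigcup_i E i.
  apply/seteqP; split => // x _; have := subr_floor_itv x.
  set z := Num.floor x => hx.
  have hz : z%:~R <= x < z%:~R + 1 by apply/andP; split; lra.
  have [z0|z0] := leP 0 z.
    by exists (absz z) => //; left; rewrite /= in_itv /= gez0_abs.
  exists (absz (z + 1)) => //; right; rewrite /= in_itv /=.
  by have -> : - (absz (z + 1))%:Z - 1 = z by lia.
apply/measurable_fun_bigcup => [i|i].
  by apply: measurableU; exact: measurable_itv.
by apply/measurable_funU; [exact: measurable_itv..|split].
Qed.

Lemma measurable_per1 h :
  measurable_fun `[0 : R, 1[ h -> measurable_fun setT (per1 h).
Proof.
move=> mh; apply: measurable_fun_unit_itvs => z.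
apply: (@eq_measurable_fun _ _ _ _ _ (h \o (fun x => x - z%:~R))).
  by move=> x; rewrite inE /= in_itv /= => /per1_itv ->.
apply: (measurable_comp (F := `[0 : R, 1[)) => //.
- move=> y [x /=]; rewrite !in_itv /= => /andP[x1 x2] <-.
  by apply/andP; split; lra.
- by apply: measurable_funB => //; exact: measurable_cst.
Qed.

Lemma in_space_per1 {h} : {within `[0, 1], continuous h} -> in_space (per1 h).
Proof.
move=> hc.
have mh : measurable_fun `[0 : R, 1] h.
  exact: subspace_continuous_measurable_fun.
have mph : measurable_fun setT (per1 h).
  apply: measurable_per1; apply: measurable_funS mh => //.
  exact/subset_itvP/subset_itv_co_cc.
have [K hK] : exists K, forall x, `|per1 h x| <= K.
  have /compact_bounded[M [_ hM]] :=
    continuous_compact hc (@segment_compact R 0 1).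
  exists (`|M| + 1) => x; apply: (hM (`|M| + 1)).
    by rewrite (le_lt_trans (ler_norm M)) // ltrDl.
  exists (x - (Num.floor x)%:~R) => //=.
  by have /andP[x0 x1] := subr_floor_itv x; rewrite in_itv /= x0 ltW.
split => //; split; first by exists K; exact: aeW.
split; last by move=> x; rewrite per1D1.
apply: measurable_bounded_integrable => //.
- exact: compact_finite_measure (@segment_compact R 0 1).
- exact: measurable_funS (measurable_funX _ mph).
- exists (K ^+ 2); split; first exact: num_real.
  move=> M KM x _ /=; rewrite normrX; apply: (le_trans _ (ltW KM)).
  by rewrite lerXn2r ?nnegrE ?(le_trans _ (hK x)).
Qed.

End period_one_extension.

Lemma graph01_attractor_invariant {R : realType} {N : nat}
    {w : nat -> R * R -> R * R} {f : R -> R} {n : nat} {t : R} :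
  is_attractor N w (graph01 f) -> (1 <= n <= N)%N -> 0 <= t <= 1 ->
  f (w n (t, f t)).1 = (w n (t, f t)).2.
Proof.
case=> _ [_ wA] nN t01.
have : graph01 f (w n (t, f t)) by rewrite wA; exists n => //; exists (t, f t).
by case=> _ ->.
Qed.

Section self_affine_functional_equation.
Context {R : realType}.
Context {N : nat} {a : R} {gn : nat -> R -> R} {f g : R -> R}.
Hypothesis N_gt0 : (0 < N)%N.
Hypothesis f_self_affine : forall n t, (1 <= n <= N)%N -> 0 <= t <= 1 ->
  f ((t + n%:R - 1) / N%:R) = a * f t + gn n t.
Hypothesis g_piecewise : forall m u, (m < N)%N ->
  m%:R / N%:R <= u < m.+1%:R / N%:R -> g u = gn m.+1 (N%:R * u - m%:R).

Lemma per1_self_affine_fe x : per1 f x - a * per1 f (N%:R * x) = per1 g x.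
Proof.
have N0 : (0 : R) < N%:R by rewrite ltr0n.
have /andP[u0 u1] := subr_floor_itv x; set u := x - _ in u0 u1 *.
have /andP[m1 m2] := trunc_itv (mulr_ge0 (ler0n R N) u0).
set m := Num.trunc _ in m1 m2.
have mN : (m < N)%N.
  by rewrite -(ltr_nat R) (le_lt_trans m1) // gtr_pMr.
rewrite -natr1 in m2.
rewrite (@per1_natmul _ f N m); last by rewrite -/u m1.
set t := N%:R * u - m%:R.
have t01 : 0 <= t <= 1 by rewrite /t; apply/andP; split; lra.
have uE : u = (t + m.+1%:R - 1) / N%:R.
  by rewrite /t -natr1; field; rewrite gt_eqF.
have gu : g u = gn m.+1 t.
  apply: g_piecewise => //.
  by rewrite ler_pdivrMr // ltr_pdivlMr // -natr1 ![u * _]mulrC m1 m2.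
rewrite /per1 -/u gu {1}uE f_self_affine //; ring.
Qed.

End self_affine_functional_equation.

Theorem theorem4p1 (R : realType) (N : nat) (xs ys : nat -> R) (a : R)
  (gn : nat -> R -> R) (fstar g : R -> R) :
  (1 < N)%N ->
  xs 0%N = 0 ->
  (forall n, (n < N)%N -> xs n < xs n.+1) ->
  xs N = 1 ->
  `|a| < 1 ->
  (forall n, (1 <= n <= N)%N -> {within `[0, 1], continuous (gn n)}) ->
  let L := fun (n : nat) (t : R) => (t + n%:R - 1) / N%:R in
  let F := fun (n : nat) (t s : R) => a * s + gn n t in
  let w := fun (n : nat) (p : R * R) => (L n p.1, F n p.1 p.2) in
  (forall n, (1 <= n <= N)%N ->
     [/\ L n (xs 0%N) = xs n.-1, L n (xs N) = xs n,
         F n (xs 0%N) (ys 0%N) = ys n.-1 & F n (xs N) (ys N) = ys n]) ->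
  {within `[0, 1], continuous fstar} ->
  (forall n, (n <= N)%N -> fstar (xs n) = ys n) ->
  is_attractor N w (graph01 fstar) ->
  (* definition of g: L_n^{-1}(t) = N t - n + 1 *)
  (forall n, (1 <= n <= N)%N -> forall t, xs n.-1 <= t < xs n ->
     g t = gn n (N%:R * t - n%:R + 1)) ->
  g 1 = gn N 1 ->
  (forall t, 1 < t -> g t = g (t - 1)) ->
  in_space (per1 fstar) /\ solves_fe N a (per1 g) (per1 fstar) /\
  (forall f, in_space f -> solves_fe N a (per1 g) f ->
     {ae (@lebesgue_measure R), forall x, f x = per1 fstar x}).
Proof.
move=> N1 x0 _ xN a1 _ L F w Lxs fc _ att gE _ _.
have N0 : (0 < N)%N by exact: ltnW.
have xsE m : (m < N)%N -> xs m = m%:R / N%:R /\ xs m.+1 = m.+1%:R / N%:R.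
  move=> mN; have [+ + _ _] := Lxs m.+1 mN.
  by rewrite /L x0 xN /= => <- <-; split; congr (_ / _); rewrite -natr1; ring.
have f_self_affine n t : (1 <= n <= N)%N -> 0 <= t <= 1 ->
    fstar ((t + n%:R - 1) / N%:R) = a * fstar t + gn n t.
  by move=> nN t01; rewrite (graph01_attractor_invariant att nN t01) /w /F.
have g_piecewise m u : (m < N)%N ->
    m%:R / N%:R <= u < m.+1%:R / N%:R -> g u = gn m.+1 (N%:R * u - m%:R).
  move=> mN um; rewrite (gE m.+1) //=; first by congr gn; rewrite -natr1; ring.
  by have [-> ->] := xsE m mN.
have fe : solves_fe N a (per1 g) (per1 fstar).
  by apply: aeW; exact: per1_self_affine_fe N0 f_self_affine g_piecewise.
have fsp := in_space_per1 fc.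
split=> //; split=> // f [_ [f_bd _]] ffe.
have [_ [fsp_bd _]] := fsp.
exact: solves_fe_ae_unique N0 a1 f_bd fsp_bd ffe fe.
Qed.
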